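(* Let $m,n,\beta\geq 1$ be integers and let $A\in\mathbb{C}^{m\times\beta}$, $B\in\mathbb{C}^{n\times\beta}$ be nonzero. Then \[ AA^*\otimes BB^* \;\succcurlyeq\; \frac{1}{\min(\operatorname{rk} AA^*,\operatorname{rk} BB^* )}\,\mathrm{vec}(BA^T)\,\mathrm{vec}(BA^T)^* \;\succcurlyeq\; 0 . \] Moreover, the coefficient $1/\min(\operatorname{rk}AA^*,\operatorname{rk}BB^* )$ is best possible, in the sense that it cannot be replaced by a larger constant uniformly over all such $A,B$: there exist nonzero $A\in\mathbb{C}^{m\times\beta}$, $B\in\mathbb{C}^{n\times\beta}$ and $u\in\mathbb{C}^{mn}$ with $\mathrm{vec}(BA^T)^*u\neq 0$ such that $u^*(AA^*\otimes BB^* )u=\frac{1}{\min(\operatorname{rk}AA^*,\operatorname{rk}BB^* )}\,|\mathrm{vec}(BA^T)^*u|^2$.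
   Context: $A\otimes B$ denotes the standard Kronecker product (the block matrix whose $(i,j)$-th block is $a_{ij}B$). For $P\in\mathbb{C}^{n\times m}$, $\mathrm{vec}(P)\in\mathbb{C}^{mn}$ is the column vector obtained by stacking the columns of $P$ (so its entry in position $n(i_1-1)+i_2$ is $P_{i_2,i_1}$). $\operatorname{rk}$ denotes rank, $X^*$ the conjugate transpose, $X^T$ the transpose. For Hermitian matrices, $X\succcurlyeq Y$ (Loewner order) means $X-Y$ is positive semidefinite. *)

From mathcomp Require Import all_boot all_order all_algebra.
From mathcomp Require Import complex mxtens.
From mathcomp Require Import reals.
Set Implicit Arguments. Unset Strict Implicit. Unset Printing Implicit Defensive.
Import Order.TTheory GRing.Theory Num.Theory.
Local Open Scope ring_scope.

Definition ctr {C : numClosedFieldType} {p q : nat} (X : 'M[C]_(p, q)) : 'M[C]_(q, p) :=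
  (map_mx Num.conj X)^T.

(* vec P for P : n x m : column-stacking, entry at index n*i1 + i2 is P i2 i1
   (0-based); mxvec is row-major, so vec P = (mxvec P^T)^T. *)
Definition vec {C : numClosedFieldType} {n m : nat} (P : 'M[C]_(n, m)) : 'cV[C]_(m * n) :=
  (mxvec P^T)^T.

Definition psdmx {C : numClosedFieldType} {k : nat} (X : 'M[C]_k) : Prop :=
  ctr X = X /\ forall u : 'cV[C]_k, 0 <= (ctr u *m X *m u) ord0 ord0.

Definition loewner_ge {C : numClosedFieldType} {k : nat} (X Y : 'M[C]_k) : Prop :=
  psdmx (X - Y).

From mathcomp Require Import all_boot all_order all_algebra.
From mathcomp Require Import complex mxtens.
From mathcomp Require Import reals.
From mathcomp Require Import sesquilinear spectral.
From mathcomp Require Import ring zify.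
Set Implicit Arguments. Unset Strict Implicit. Unset Printing Implicit Defensive.
Import Order.TTheory GRing.Theory Num.Theory.
Local Open Scope ring_scope.

(* Put K := A *t B.  Then AA^* *t BB^* = K K^* and vec (B A^T) = K vec 1, so for
   w := K^* u the quadratic form at u is |w|^2 and vec (B A^T)^* u = vec 1^* w.
   If P is the orthogonal projector onto the row space of A, then (P *t 1) w = w,
   and Cauchy-Schwarz gives
     |vec 1^* w|^2 <= |(P *t 1) vec 1|^2 |w|^2 = \tr P |w|^2 = rk A |w|^2;
   likewise with B, and rk A <= rk AA^*.  Equality holds for matrix units. *)

Lemma index_allpairs (T1 T2 : eqType) (s : seq T1) (t : seq T2) x y :
  x \in s -> y \in t ->
  index (x, y) [seq (a, b) | a <- s, b <- t] = (index x s * size t + index y t)%N.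
Proof.
elim: s => //= a s IH; rewrite inE => xs yt.
rewrite ?allpairs_cons index_cat.
have [->|nxa] := eqVneq x a.
  rewrite map_f //=.
  by rewrite (index_map (fun b1 b2 (h : (a, b1) = (a, b2)) => congr1 snd h)).
have xs' : x \in s by move: xs; rewrite (negPf nxa).
have -> : (x, y) \in [seq (a, b) | b <- t] = false.
  by apply/negP => /mapP [b _ [E _]]; move: nxa; rewrite E eqxx.
by rewrite size_map IH // mulSn addnA.
Qed.

Lemma mxvec_indexE m n (i : 'I_m) (j : 'I_n) : mxvec_index i j = mxtens_index (i, j).
Proof.
apply: val_inj => /=.
rewrite /enum_rank enum_rank_in.unlock insubdK.
  rewrite enumT unlock /= /prod_enum index_allpairs ?mem_enum //.
  by rewrite !index_enum_ord size_enum_ord.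
by rewrite cardE [_ \in _]index_mem mem_enum.
Qed.

Section ConjTranspose.
Variable C : numClosedFieldType.
Implicit Types p q r s k : nat.

Lemma ctrE p q (X : 'M[C]_(p, q)) i j : ctr X j i = (X i j)^*.
Proof. by rewrite !mxE. Qed.

Lemma ctrK p q (X : 'M[C]_(p, q)) : ctr (ctr X) = X.
Proof. by apply/matrixP=> i j; rewrite !mxE conjCK. Qed.

Lemma ctrM p q r (X : 'M[C]_(p, q)) (Y : 'M[C]_(q, r)) : ctr (X *m Y) = ctr Y *m ctr X.
Proof. by rewrite /ctr map_mxM trmx_mul. Qed.

Lemma ctrT p q r s (X : 'M[C]_(p, q)) (Y : 'M[C]_(r, s)) : ctr (X *t Y) = ctr X *t ctr Y.
Proof. by rewrite /ctr map_mxT trmx_tens. Qed.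

Lemma ctrB p q (X Y : 'M[C]_(p, q)) : ctr (X - Y) = ctr X - ctr Y.
Proof. by apply/matrixP=> i j; rewrite !mxE rmorphB. Qed.

Lemma ctrZ p q a (X : 'M[C]_(p, q)) : ctr (a *: X) = a^* *: ctr X.
Proof. by apply/matrixP=> i j; rewrite !mxE rmorphM. Qed.

Lemma ctr1 p : ctr (1%:M : 'M[C]_p) = 1%:M.
Proof. by apply/matrixP=> i j; rewrite !mxE rmorphMn rmorph1 eq_sym. Qed.

Lemma ctr_trmx p q (X : 'M[C]_(p, q)) : ctr X^T = (ctr X)^T.
Proof. by apply/matrixP=> i j; rewrite !mxE. Qed.

Lemma ctr_delta p q (i : 'I_p) (j : 'I_q) : ctr (delta_mx i j : 'M[C]_(p, q)) = delta_mx j i.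
Proof. by rewrite /ctr map_delta_mx trmx_delta. Qed.

Lemma ctr_mulmx_ctr p q (X : 'M[C]_(p, q)) : ctr (X *m ctr X) = X *m ctr X.
Proof. by rewrite ctrM ctrK. Qed.

Lemma ctr_unitarymx p q (X : 'M[C]_(p, q)) : X \is unitarymx -> X *m ctr X = 1%:M.
Proof.
move/unitarymxP; congr (_ *m _ = _).
by apply/matrixP=> i j; rewrite !mxE.
Qed.

Lemma dotmx_ge0 k (x : 'cV[C]_k) : 0 <= (ctr x *m x) 0 0.
Proof. by rewrite mxE sumr_ge0 // => i _; rewrite !mxE mulrC mul_conjC_ge0. Qed.

Lemma rowmx_dot_eq0 k (y : 'rV[C]_k) : (y *m ctr y) 0 0 = 0 -> y = 0.
Proof.
rewrite mxE => /psumr_eq0P y0; apply/rowP => i; rewrite mxE.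
have := y0 (fun j _ => ltac:(by rewrite ctrE mul_conjC_ge0)) i isT.
by rewrite ctrE => /eqP; rewrite mul_conjC_eq0 => /eqP.
Qed.

Lemma cauchy_schwarz k (x y : 'cV[C]_k) :
  `|(ctr x *m y) 0 0| ^+ 2 <= (ctr x *m x) 0 0 * (ctr y *m y) 0 0.
Proof.
have dotE (a b : 'cV[C]_k) : (ctr a *m b) 0 0 = dotmx b^T a^T.
  by rewrite dotmxE !mxE; apply: eq_bigr => i _; rewrite !mxE mulrC.
rewrite !dotE mulrC.
by have [+ _] := CauchySchwarz (@dotmx C k) y^T x^T.
Qed.

Lemma quad_rank1 k (v u : 'cV[C]_k) :
  (ctr u *m (v *m ctr v) *m u) 0 0 = `|(ctr v *m u) 0 0| ^+ 2.
Proof.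
rewrite !mulmxA -(mulmxA (ctr u *m v)) [LHS]mxE big_ord1.
have -> : (ctr u *m v) 0 0 = ((ctr v *m u) 0 0)^* by rewrite -ctrE ctrM ctrK.
by rewrite normCK mulrC.
Qed.

Lemma loewner_ge_rank1 k (X : 'M[C]_k) (v : 'cV[C]_k) c :
  ctr X = X -> 0 <= c ->
  (forall u : 'cV[C]_k, c * `|(ctr v *m u) 0 0| ^+ 2 <= (ctr u *m X *m u) 0 0) ->
  loewner_ge X (c *: (v *m ctr v)).
Proof.
move=> XH c0 quad_ge; split.
  by rewrite ctrB XH ctrZ ctr_mulmx_ctr geC0_conj.
move=> u; rewrite mulmxBr mulmxBl mxE [in X in _ + X]mxE subr_ge0.
by rewrite -scalemxAr -scalemxAl mxE quad_rank1 quad_ge.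
Qed.

Lemma psdmx_rank1 k (v : 'cV[C]_k) c : 0 <= c -> loewner_ge (c *: (v *m ctr v)) 0.
Proof.
move=> c0; split; first by rewrite subr0 ctrZ ctr_mulmx_ctr geC0_conj.
move=> u; rewrite subr0 -scalemxAr -scalemxAl mxE quad_rank1.
by rewrite mulr_ge0 // exprn_ge0.
Qed.

End ConjTranspose.

Section Vectorization.
Variable C : numClosedFieldType.

Lemma big_mxtens_index p q (F : 'I_(p * q) -> C) :
  \sum_k F k = \sum_(a < p) \sum_(b < q) F (mxtens_index (a, b)).
Proof.
rewrite pair_big /= (reindex (@mxtens_index p q)) /=.
  by apply: eq_bigr => -[a b].
by exists (@mxtens_unindex p q) => k _; rewrite ?mxtens_indexK ?mxtens_unindexK.
Qed.

Lemma vecE n m (P : 'M[C]_(n, m)) i j : vec P (mxtens_index (i, j)) 0 = P j i.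
Proof. by rewrite /vec mxE -mxvec_indexE mxvecE mxE. Qed.

Lemma vec_mulmx m n b c (A : 'M[C]_(m, b)) (B : 'M[C]_(n, c)) (X : 'M[C]_(c, b)) :
  vec (B *m X *m A^T) = (A *t B) *m vec X.
Proof.
apply/matrixP => k l; rewrite [l]ord1; case: (mxtens_indexP k) => i j.
rewrite vecE [RHS]mxE big_mxtens_index !mxE; apply: eq_bigr => a _.
rewrite !mxE big_distrl /=; apply: eq_bigr => d _.
by rewrite tensmxE vecE; ring.
Qed.

Lemma vec_dot n m (P : 'M[C]_(n, m)) : (ctr (vec P) *m vec P) 0 0 = \tr (P *m ctr P).
Proof.
rewrite mxE big_mxtens_index /mxtrace exchange_big /=; apply: eq_bigr => i _.
rewrite mxE; apply: eq_bigr => j _.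
by rewrite ctrE !vecE ctrE mulrC.
Qed.

End Vectorization.

Section Projector.
Variable C : numClosedFieldType.

Lemma mxrank_le_mulmx_ctr m b (A : 'M[C]_(m, b)) : (\rank A <= \rank (A *m ctr A))%N.
Proof.
have sK : (kermx (A *m ctr A) <= kermx A)%MS.
  apply/sub_kermxP/row_matrixP => i; rewrite row_mul row0.
  have /sub_kermxP : (row i (kermx (A *m ctr A)) <= kermx (A *m ctr A))%MS.
    exact: row_sub.
  set x := row i _ => xK; apply: rowmx_dot_eq0.
  by rewrite ctrM mulmxA -(mulmxA x) xK mul0mx mxE.
have := mxrankS sK; rewrite !mxrank_ker.
have := rank_leq_row A; have := rank_leq_row (A *m ctr A); lia.
Qed.

(* The projector is Q^* Q for an orthonormal basis Q of the row space of A. *)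
Lemma row_space_projector m b (A : 'M[C]_(m, b)) : exists P : 'M[C]_b,
  [/\ ctr P = P, P *m P = P, A *m P = A & \tr P = (\rank A)%:R].
Proof.
set Q := schmidt (row_base A).
have QQ : Q *m ctr Q = 1%:M.
  exact/ctr_unitarymx/schmidt_unitarymx/rank_leq_col.
exists (ctr Q *m Q); split.
- by rewrite ctrM ctrK.
- by rewrite mulmxA -(mulmxA (ctr Q)) QQ mulmx1.
- have : (A <= Q)%MS by rewrite /Q (eqmx_schmidt_free (row_base_free A)) eq_row_base.
  by case/submxP => D AD; rewrite {1}AD mulmxA -(mulmxA D) QQ mulmx1.
- by rewrite mxtrace_mulC QQ mxtrace1.
Qed.

Lemma cauchy_schwarz_projector k (S : 'M[C]_k) (x w : 'cV[C]_k) :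
  ctr S = S -> S *m w = w ->
  `|(ctr x *m w) 0 0| ^+ 2 <= (ctr (S *m x) *m (S *m x)) 0 0 * (ctr w *m w) 0 0.
Proof.
move=> SH Sw; have -> : ctr x *m w = ctr (S *m x) *m w by rewrite ctrM SH -mulmxA Sw.
exact: cauchy_schwarz.
Qed.

End Projector.

Section TensorGram.
Variables (C : numClosedFieldType) (m n b : nat).
Variables (A : 'M[C]_(m, b)) (B : 'M[C]_(n, b)).

Local Notation K := (A *t B).
Local Notation e := (vec (1%:M : 'M[C]_b)).

Lemma tens_gramE : (A *m ctr A) *t (B *m ctr B) = K *m ctr K.
Proof. by rewrite ctrT tensmx_mul. Qed.

Lemma vec_mul_trmxE : vec (B *m A^T) = K *m e.
Proof. by rewrite -vec_mulmx mulmx1. Qed.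

Lemma tens_gram_quad (u : 'cV[C]_(m * n)) :
  (ctr u *m ((A *m ctr A) *t (B *m ctr B)) *m u) 0 0
  = (ctr (ctr K *m u) *m (ctr K *m u)) 0 0.
Proof. by rewrite tens_gramE ctrM ctrK !mulmxA. Qed.

Lemma vec_mul_trmx_dot (u : 'cV[C]_(m * n)) :
  (ctr (vec (B *m A^T)) *m u) 0 0 = (ctr e *m (ctr K *m u)) 0 0.
Proof. by rewrite vec_mul_trmxE ctrM mulmxA. Qed.

Lemma dot_vec1_le_rankl (u : 'cV[C]_(m * n)) (w := ctr K *m u) :
  `|(ctr e *m w) 0 0| ^+ 2 <= (\rank A)%:R * (ctr w *m w) 0 0.
Proof.
have [P [PH PP AP trP]] := row_space_projector A.
have SH : ctr (P *t (1%:M : 'M[C]_b)) = P *t 1%:M by rewrite ctrT PH ctr1.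
have Sw : (P *t 1%:M) *m w = w.
  by rewrite /w mulmxA ctrT tensmx_mul mul1mx -[P]ctrK -ctrM PH AP.
have := cauchy_schwarz_projector e SH Sw.
by rewrite -vec_mulmx !mul1mx vec_dot ctr_trmx PH -trmx_mul mxtrace_tr PP trP.
Qed.

Lemma dot_vec1_le_rankr (u : 'cV[C]_(m * n)) (w := ctr K *m u) :
  `|(ctr e *m w) 0 0| ^+ 2 <= (\rank B)%:R * (ctr w *m w) 0 0.
Proof.
have [P [PH PP BP trP]] := row_space_projector B.
have SH : ctr ((1%:M : 'M[C]_b) *t P) = 1%:M *t P by rewrite ctrT PH ctr1.
have Sw : (1%:M *t P) *m w = w.
  by rewrite /w mulmxA ctrT tensmx_mul mul1mx -[P]ctrK -ctrM PH BP.
have := cauchy_schwarz_projector e SH Sw.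
by rewrite -vec_mulmx trmx1 !mulmx1 vec_dot PH PP trP.
Qed.

Lemma tens_gram_quad_ge (u : 'cV[C]_(m * n))
    (c := ((minn (\rank (A *m ctr A)) (\rank (B *m ctr B)))%:R)^-1) :
  c * `|(ctr (vec (B *m A^T)) *m u) 0 0| ^+ 2
  <= (ctr u *m ((A *m ctr A) *t (B *m ctr B)) *m u) 0 0.
Proof.
rewrite {}/c tens_gram_quad vec_mul_trmx_dot.
set N := minn _ _; set z := `|_| ^+ 2; set q := (ctr (ctr K *m u) *m _) 0 0.
have q0 : 0 <= q := dotmx_ge0 _.
have zN : z <= N%:R * q.
  rewrite /N /minn; case: ifP => _.
  - apply: le_trans (dot_vec1_le_rankl u) _; apply: ler_wpM2r => //.
    by rewrite ler_nat mxrank_le_mulmx_ctr.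
  - apply: le_trans (dot_vec1_le_rankr u) _; apply: ler_wpM2r => //.
    by rewrite ler_nat mxrank_le_mulmx_ctr.
have [-> | N0] := eqVneq N 0%N; first by rewrite invr0 mul0r.
apply: le_trans (ler_wpM2l _ zN) _; first by rewrite invr_ge0 ler0n.
by rewrite mulrA mulVf ?mul1r // pnatr_eq0.
Qed.

End TensorGram.

Section MatrixUnits.
Variables (C : numClosedFieldType) (m n b : nat).

Local Notation A := (delta_mx 0 0 : 'M[C]_(m.+1, b.+1)).
Local Notation B := (delta_mx 0 0 : 'M[C]_(n.+1, b.+1)).

Lemma mxtrace_delta k (i : 'I_k) : \tr (delta_mx i i : 'M[C]_k) = 1.
Proof.
rewrite /mxtrace (bigD1 i) //= big1 ?addr0; first by rewrite mxE !eqxx.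
by move=> j /negPf ji; rewrite mxE ji.
Qed.

Lemma vec_delta_dot p q : (ctr (vec (delta_mx 0 0 : 'M[C]_(p.+1, q.+1))) *m
  vec (delta_mx 0 0 : 'M[C]_(p.+1, q.+1))) 0 0 = 1.
Proof. by rewrite vec_dot ctr_delta mul_delta_mx mxtrace_delta. Qed.

Lemma delta_mx_neq0 p q (i : 'I_p) (j : 'I_q) : (delta_mx i j : 'M[C]_(p, q)) != 0.
Proof.
by apply/eqP => /matrixP/(_ i j); rewrite !mxE !eqxx => /eqP; rewrite oner_eq0.
Qed.

Lemma delta_gram_rank : minn (\rank (A *m ctr A)) (\rank (B *m ctr B)) = 1%N.
Proof. by rewrite !ctr_delta !mul_delta_mx !mxrank_delta. Qed.

Lemma delta_tens_gram_quad (v := vec (B *m A^T)) :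
  (ctr v *m ((A *m ctr A) *t (B *m ctr B)) *m v) 0 0 = 1.
Proof.
rewrite tens_gram_quad.
have -> : ctr (A *t B) *m v = vec (delta_mx 0 0 : 'M[C]_b.+1).
  rewrite /v vec_mul_trmxE mulmxA ctrT tensmx_mul -vec_mulmx mulmx1 !ctr_delta.
  by rewrite !mul_delta_mx trmx_delta mul_delta_mx.
by rewrite vec_delta_dot.
Qed.

End MatrixUnits.

Local Open Scope complex_scope.

Theorem theorem1p3 (R : realType) (m n b : nat) :
  (0 < m)%N -> (0 < n)%N -> (0 < b)%N ->
  (forall (A : 'M[R[i]]_(m, b)) (B : 'M[R[i]]_(n, b)), A != 0 -> B != 0 ->
     let c := ((minn (\rank (A *m ctr A)) (\rank (B *m ctr B)))%:R)^-1 in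
     let v := vec (B *m A^T) in
     loewner_ge ((A *m ctr A) *t (B *m ctr B)) (c *: (v *m ctr v)) /\
     loewner_ge (c *: (v *m ctr v)) 0)
  /\
  (exists (A : 'M[R[i]]_(m, b)) (B : 'M[R[i]]_(n, b)) (u : 'cV[R[i]]_(m * n)),
     let c := ((minn (\rank (A *m ctr A)) (\rank (B *m ctr B)))%:R)^-1 in
     let v := vec (B *m A^T) in
     [/\ A != 0, B != 0, (ctr v *m u) ord0 ord0 != 0 &
         (ctr u *m ((A *m ctr A) *t (B *m ctr B)) *m u) ord0 ord0
           = c * `|(ctr v *m u) ord0 ord0| ^+ 2]).
Proof.
case: m => // m; case: n => // n; case: b => // b _ _ _; split.
  move=> A B _ _ c v; have c0 : 0 <= c by rewrite invr_ge0 ler0n.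
  split; last exact: psdmx_rank1.
  apply: loewner_ge_rank1 c0 (tens_gram_quad_ge A B).
  by rewrite ctrT !ctr_mulmx_ctr.
pose A : 'M[R[i]]_(m.+1, b.+1) := delta_mx 0 0.
pose B : 'M[R[i]]_(n.+1, b.+1) := delta_mx 0 0.
exists A, B, (vec (B *m A^T)) => c v.
have vv : (ctr v *m v) 0 0 = 1.
  by rewrite /v trmx_delta mul_delta_mx vec_delta_dot.
split; [exact: delta_mx_neq0 | exact: delta_mx_neq0 | by rewrite vv oner_eq0 |].
by rewrite delta_tens_gram_quad vv normr1 expr1n mulr1 /c delta_gram_rank invr1.
Qed.
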